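(* Let $G=E_u(L)=0$ be an Euler–Lagrange equation and let $P=P(x,u,u_1,\dots,u_n)$ be the characteristic of a non-variational contact symmetry, with associated contact vector field $X_P=\xi^i\partial_{x^i}+\eta\partial_u$, $\xi^i=-\partial P/\partial u_i$, $\eta=P-u_i\,\partial P/\partial u_i$, satisfying $\mathrm{pr}\,X_P(G)=fG$ for a differential function $f$; take $R_P=f-\xi^iD_i$. Then the symmetry recursion operator $S=R_P^*+P'$ is the multiplication operator $$S=f+\partial P/\partial u-D_i\big(\partial P/\partial u_i\big),$$ and this function is a variational integrating factor of $G$.
   Context: Setting: independent variables $x=(x^1,\dots,x^n)$, one dependent variable $u$, $u_i=\partial u/\partial x^i$, summation over repeated indices; $D_i$ total derivatives. Fréchet derivative $f'=\sum_J(\partial f/\partial u_J)D_J$; formal adjoint ${}^*$ of $\sum_Ja^JD_J$ is $A\mapsto\sum_J(-1)^{|J|}D_J(a^JA)$. $E_u$ is the Euler–Lagrange operator. $\mathrm{pr}$ denotes prolongation (of the contact vector field) to jet space. A symmetry $P\partial_u$ is one with $G'(P)=0$ on solutions, and it is variational if $E_u(PG)\equiv0$. A variational integrating factor of $G$ is a differential function $W\not\equiv0$ with $WG=E_u(\tilde L)$ for some $\tilde L$. *)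

(* Formal variational calculus on the jet space of one
   dependent variable u and n independent variables x^1..x^n, in the
   axiomatic setting of an "algebra of differential functions"
   (cf. De Sole--Kac): a commutative ring of differential functions
   equipped with commuting partial derivations d/dx^i and d/du_J, the jet
   coordinates u_J, and the property that every differential function
   depends on finitely many jet coordinates.  The ring of smooth functions
   of (x, u^{(k)}), k finite, is an instance. *)
From HB Require Import structures.
From mathcomp Require Import all_boot all_order all_algebra.
Set Implicit Arguments. Unset Strict Implicit. Unset Printing Implicit Defensive.
Import Order.TTheory GRing.Theory Num.Theory.
Local Open Scope ring_scope.

(* multi-indices J = (J_1,...,J_n); u_J = D_J u *)
Definition multi (n : nat) := {ffun 'I_n -> nat}.
Definition mord n (J : multi n) : nat := (\sum_(i < n) J i)%N.
Definition mzero n : multi n := [ffun _ => 0%N].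
Definition munit n (i : 'I_n) : multi n := [ffun j => nat_of_bool (i == j)].
Definition madd n (J K : multi n) : multi n := [ffun j => (J j + K j)%N].
Definition mbox n k (B : {ffun 'I_n -> 'I_k.+1}) : multi n :=
  [ffun i => nat_of_ord (B i)].

Record jet_algebra (n : nat) := JetAlgebra {
  ja_carrier : comNzRingType;
  ja_u : multi n -> ja_carrier;
  ja_dx : 'I_n -> ja_carrier -> ja_carrier;
  ja_du : multi n -> ja_carrier -> ja_carrier;
  ja_ord : ja_carrier -> nat;                   (* a bound on the order *)
  ja_dxD : forall i a b, ja_dx i (a + b) = ja_dx i a + ja_dx i b;
  ja_dxM : forall i a b, ja_dx i (a * b) = ja_dx i a * b + a * ja_dx i b;
  ja_duD : forall J a b, ja_du J (a + b) = ja_du J a + ja_du J b;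
  ja_duM : forall J a b, ja_du J (a * b) = ja_du J a * b + a * ja_du J b;
  ja_dx_u : forall i K, ja_dx i (ja_u K) = 0;
  ja_du_u : forall J K, ja_du J (ja_u K) = (J == K)%:R;
  ja_dxdx : forall i j a, ja_dx i (ja_dx j a) = ja_dx j (ja_dx i a);
  ja_dudu : forall J K a, ja_du J (ja_du K a) = ja_du K (ja_du J a);
  ja_dxdu : forall i J a, ja_dx i (ja_du J a) = ja_du J (ja_dx i a);
  ja_ordP : forall a J, (ja_ord a < mord J)%N -> ja_du J a = 0
}.

Arguments ja_carrier {n} j0 : rename.
Arguments ja_u {n} j0 : rename.
Arguments ja_dx {n} j0 : rename.
Arguments ja_du {n} j0 : rename.
Arguments ja_ord {n} j0 : rename.

Section Calculus.
Variables (n : nat) (V : jet_algebra n).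
Local Notation A := (ja_carrier V).
Local Notation u := (ja_u V).
Local Notation dx := (ja_dx V).
Local Notation du := (ja_du V).
Local Notation ord := (ja_ord V).

Definition totD (i : 'I_n) (a : A) : A :=
  dx i a + \sum_(B : {ffun 'I_n -> 'I_(ord a).+1})
              u (madd (mbox B) (munit i)) * du (mbox B) a.

Definition totDm (K : multi n) (a : A) : A :=
  foldr (fun i b => iter (K i) (totD i) b) a (enum 'I_n).

Definition euler (L : A) : A :=
  \sum_(B : {ffun 'I_n -> 'I_(ord L).+1})
     (-1) ^+ mord (mbox B) * totDm (mbox B) (du (mbox B) L).

Definition frechet (f a : A) : A :=
  \sum_(B : {ffun 'I_n -> 'I_(ord f).+1}) du (mbox B) f * totDm (mbox B) a.

(* total differential operator sum_{J, J_i <= k} c^J D_J and its formal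
   adjoint a |-> sum_J (-1)^|J| D_J (c^J a) *)
Definition applyop (k : nat) (c : multi n -> A) (a : A) : A :=
  \sum_(B : {ffun 'I_n -> 'I_k.+1}) c (mbox B) * totDm (mbox B) a.
Definition adjointop (k : nat) (c : multi n -> A) (a : A) : A :=
  \sum_(B : {ffun 'I_n -> 'I_k.+1})
     (-1) ^+ mord (mbox B) * totDm (mbox B) (c (mbox B) * a).

(* prolongation of X = xi^i d/dx^i + eta d/du :
   pr X = xi^i d/dx^i + sum_J phi^J d/du_J,
   phi^J = D_J(eta - xi^i u_i) + xi^i u_{J+e_i} *)
Definition prolong (xi : 'I_n -> A) (eta : A) (G : A) : A :=
  \sum_(i < n) xi i * dx i G +
  \sum_(B : {ffun 'I_n -> 'I_(ord G).+1})
     (totDm (mbox B) (eta - \sum_(i < n) xi i * u (munit i))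
      + \sum_(i < n) xi i * u (madd (mbox B) (munit i))) * du (mbox B) G.

Definition xiP (P : A) (i : 'I_n) : A := - du (munit i) P.
Definition etaP (P : A) : A :=
  P - \sum_(i < n) u (munit i) * du (munit i) P.

(* coefficients of R_P = f - xi^i D_i *)
Definition RPcoef (P f : A) (K : multi n) : A :=
  (K == mzero n)%:R * f - \sum_(i < n) (K == munit i)%:R * xiP P i.

Definition Sop (P f : A) (a : A) : A := adjointop 1 (RPcoef P f) a + frechet P a.

Definition var_int_factor (W G : A) : Prop :=
  W != 0 /\ exists Lt : A, W * G = euler Lt.

End Calculus.

From HB Require Import structures.
From mathcomp Require Import all_boot all_order all_algebra.
From mathcomp Require Import ring.
Import GRing.Theory.
Local Open Scope ring_scope.

(* Two identities carry the proof.
   (1) For a first-order P, P'(a) = P_u a + P_{u_i} D_i a and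
       R_P^*(a) = f a - D_i (P_{u_i} a), so in S the terms P_{u_i} D_i a
       cancel and S a = W a.
   (2) For G = E(L), computing E(L'[P]) in two ways (commuting E past the
       Frechet derivative, or integrating by parts) gives
       E(P G) = G'[P] + P'^*(G).  Since pr X_P (G) = G'[P] - P_{u_i} D_i G,
       the symmetry condition turns (2) into W G = E(P G), which is nonzero. *)

Set Implicit Arguments. Unset Strict Implicit. Unset Printing Implicit Defensive.

Section AdditiveMaps.
Variables U W : zmodType.

Definition additive_map (f : U -> W) := forall x y, f (x + y) = f x + f y.

Lemma additive0 f : additive_map f -> f 0 = 0.
Proof.
move=> fD; have := fD 0 0; rewrite addr0 => e.
by apply: (addrI (f 0)); rewrite addr0 -e.
Qed.

Lemma additiveN f : additive_map f -> forall x, f (- x) = - f x.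
Proof.
move=> fD x; apply/eqP; rewrite -subr_eq0 opprK -fD addNr.
by rewrite (additive0 fD).
Qed.

Lemma additive_sum f : additive_map f ->
  forall (I : Type) (r : seq I) (P : pred I) (F : I -> U),
  f (\sum_(i <- r | P i) F i) = \sum_(i <- r | P i) f (F i).
Proof. by move=> fD I r P F; apply: (big_morph f fD (additive0 fD)). Qed.

End AdditiveMaps.

Lemma derivation_signr (R : pzRingType) (f : R -> R) :
  additive_map f -> (forall a b, f (a * b) = f a * b + a * f b) ->
  forall m, f ((-1) ^+ m) = 0.
Proof.
move=> fD fM; have f1 : f 1 = 0.
  have := fM 1 1; rewrite !mul1r mulr1 => e.
  by apply: (addrI (f 1)); rewrite addr0 -e.
elim=> [|m ih]; first by rewrite expr0.
by rewrite exprS fM ih mulr0 addr0 (additiveN fD) f1 oppr0 mul0r.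
Qed.

Section MultiIndices.
Variable n : nat.
Implicit Types (J K M : multi n) (i j : 'I_n).

Lemma mbox_val k (B : {ffun 'I_n -> 'I_k.+1}) j : mbox B j = B j.
Proof. by rewrite ffunE. Qed.

Lemma mbox_inj k : injective (@mbox n k).
Proof.
move=> B1 B2 /ffunP eB; apply/ffunP => i; apply/val_inj.
by have := eB i; rewrite !mbox_val.
Qed.

Lemma mord_ge K j : (K j <= mord K)%N.
Proof. by rewrite /mord (bigD1 j) //= leq_addr. Qed.

Lemma mordD J K : mord (madd J K) = (mord J + mord K)%N.
Proof. by rewrite /mord -big_split /=; apply: eq_bigr => i _; rewrite ffunE. Qed.

Lemma mord_unit i : mord (munit i) = 1%N.
Proof.
rewrite /mord (bigD1 i) //= big1 ?ffunE ?eqxx // => j ji.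
by rewrite ffunE eq_sym (negbTE ji).
Qed.

Lemma mord0 : mord (mzero n) = 0%N.
Proof. by rewrite /mord big1 // => i _; rewrite ffunE. Qed.

Lemma mord_eq0 K : mord K = 0%N -> K = mzero n.
Proof.
move=> K0; apply/ffunP => i; rewrite ffunE; apply/eqP.
by rewrite -leqn0 -K0 mord_ge.
Qed.

(* A multi-index of positive order has a positive entry: the induction step
   for D_K = D_i D_{K - e_i}. *)
Lemma pos_entry K d : mord K = d.+1 -> exists i, (0 < K i)%N.
Proof.
move=> Kd; have : ~~ [forall j, K j == 0%N].
  by apply/negP => /forallP K0; move: Kd; rewrite /mord big1 // => j _; apply/eqP.
by case/forallPn => j; rewrite -lt0n => Kj; exists j.
Qed.

Lemma maddC J K : madd J K = madd K J.
Proof. by apply/ffunP => i; rewrite !ffunE addnC. Qed.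

Lemma maddA J K M : madd J (madd K M) = madd (madd J K) M.
Proof. by apply/ffunP => i; rewrite !ffunE addnA. Qed.

Lemma madd0 K : madd (mzero n) K = K.
Proof. by apply/ffunP => i; rewrite !ffunE. Qed.

Lemma munit_neq0 i : (munit i == mzero n) = false.
Proof. by apply/eqP => /ffunP /(_ i); rewrite !ffunE eqxx. Qed.

Lemma munit_eq i j : (munit i == munit j) = (i == j).
Proof. by apply/eqP/eqP => [/ffunP /(_ i)|->//]; rewrite !ffunE eqxx; case: eqP. Qed.

(* K - e_i, truncated at 0 *)
Definition msub K i : multi n := [ffun j => (K j - (i == j))%N].

Lemma msub_madd K i : msub (madd K (munit i)) i = K.
Proof. by apply/ffunP => j; rewrite !ffunE addnK. Qed.

Lemma madd_msub K i : (0 < K i)%N -> madd (msub K i) (munit i) = K.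
Proof.
move=> Ki; apply/ffunP => j; rewrite !ffunE.
by case: eqP => [<-|_]; rewrite ?subnK // subn0 addn0.
Qed.

Lemma mord_msub K i : (0 < K i)%N -> mord (msub K i) = (mord K).-1.
Proof. by move=> Ki; rewrite -{2}(madd_msub Ki) mordD mord_unit addn1. Qed.

Lemma mord_msub_gt m K i : (m.+1 < K i)%N -> (m < mord (msub K i))%N.
Proof.
move=> Ki; have := mord_ge (msub K i) i; rewrite ffunE eqxx subn1.
by apply: leq_trans; rewrite -ltnS prednK // (leq_trans _ Ki).
Qed.

Lemma madd_unit_eq K i J :
  (madd K (munit i) == J) = (0 < J i)%N && (K == msub J i).
Proof.
apply/eqP/andP => [<-|[Ji /eqP ->]]; last exact: madd_msub.
by rewrite !ffunE eqxx addn1 msub_madd.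
Qed.

Lemma mord_le1 K : (mord K <= 1)%N -> K = mzero n \/ exists j, K = munit j.
Proof.
case Kd: (mord K) => [|d] K1; first by left; apply: mord_eq0.
right; have [j Kj] := pos_entry Kd; exists j.
have Kj0 : mord (msub K j) = 0%N by rewrite mord_msub // Kd; case: d K1 {Kd}.
by rewrite -(madd_msub Kj) (mord_eq0 Kj0) maddC; apply/ffunP => l; rewrite !ffunE addn0.
Qed.

End MultiIndices.

Section BoxSums.
Variables (R : zmodType) (n : nat).
Implicit Types (F G : multi n -> R) (J K M : multi n) (i : 'I_n).

Definition msum (k : nat) F : R := \sum_(B : {ffun 'I_n -> 'I_k.+1}) F (mbox B).

Lemma msum_ext k F G : (forall K, F K = G K) -> msum k F = msum k G.
Proof. by move=> FG; apply: eq_bigr => B _; rewrite FG. Qed.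

Lemma msumD k F G : msum k (fun K => F K + G K) = msum k F + msum k G.
Proof. exact: big_split. Qed.

Lemma msumN k F : msum k (fun K => - F K) = - msum k F.
Proof. exact: sumrN. Qed.

Lemma msum_exchange k1 k2 (F : multi n -> multi n -> R) :
  msum k1 (fun K => msum k2 (F K)) = msum k2 (fun J => msum k1 (F^~ J)).
Proof. exact: exchange_big. Qed.

Lemma msum_morph (f : R -> R) : additive_map f ->
  forall k F, f (msum k F) = msum k (fun K => f (F K)).
Proof. by move=> fD k F; apply: additive_sum. Qed.

Lemma msum_truncate m k F :
  (forall K, (m < mord K)%N -> F K = 0) -> (m <= k)%N -> msum k F = msum m F.
Proof.
move=> F0 le_mk; rewrite /msum.
rewrite (bigID (fun B : {ffun 'I_n -> 'I_k.+1} => [forall j, B j <= m]%N)) /=.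
rewrite [X in _ + X]big1 ?addr0; last first.
  move=> B /forallPn [j]; rewrite -ltnNge => Bj; apply: F0.
  by apply: leq_trans (mord_ge _ j); rewrite mbox_val.
have le_m1k1 : (m.+1 <= k.+1)%N by [].
pose widen (B : {ffun 'I_n -> 'I_m.+1}) : {ffun 'I_n -> 'I_k.+1} :=
  [ffun j => widen_ord le_m1k1 (B j)].
pose shrink (B : {ffun 'I_n -> 'I_k.+1}) : {ffun 'I_n -> 'I_m.+1} :=
  [ffun j => inord (B j)].
rewrite (reindex_onto widen shrink); last first.
  move=> B /forallP Bm; apply/ffunP => j; apply/val_inj.
  by rewrite !ffunE /= inordK // ltnS Bm.
apply: eq_big => [B|B _]; last by congr F; apply/ffunP => j; rewrite !ffunE.
apply/andP; split; first by apply/forallP => j; rewrite ffunE /= -ltnS.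
by apply/eqP/ffunP => j; apply/val_inj; rewrite !ffunE /= inordK ?ltn_ord.
Qed.

Lemma msum_truncate_min m o k F :
  (forall K, (m < mord K)%N -> F K = 0) -> (forall K, (o < mord K)%N -> F K = 0) ->
  (m <= k)%N -> msum o F = msum k F.
Proof.
move=> Fm Fo le_mk; have Fmin K : (minn m o < mord K)%N -> F K = 0.
  by rewrite gtn_min => /orP [/Fm|/Fo].
rewrite (msum_truncate Fmin (geq_minr _ _)).
by rewrite (msum_truncate Fmin (leq_trans (geq_minl _ _) le_mk)).
Qed.

Lemma val_inord k m : nat_of_ord (inord m : 'I_k.+1) = if (m <= k)%N then m else 0%N.
Proof.
case: ifP => mk; first by rewrite inordK.
by rewrite /inord /insubd; case: insubP => //= x; rewrite ltnS mk.
Qed.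

(* Index shift K |-> K + e_i, the combinatorial core of every integration by
   parts: boundary terms vanish because F vanishes for large entries. *)
Lemma msum_shift k i F :
  (forall M, (k < M i)%N -> F M = 0) ->
  msum k (fun K => F (madd K (munit i))) =
  msum k (fun M => if (0 < M i)%N then F M else 0).
Proof.
move=> F0.
pose inc (B : {ffun 'I_n -> 'I_k.+1}) : {ffun 'I_n -> 'I_k.+1} :=
  [ffun j => if j == i then inord (B j).+1 else B j].
pose dec (B : {ffun 'I_n -> 'I_k.+1}) : {ffun 'I_n -> 'I_k.+1} :=
  [ffun j => if j == i then inord (B j).-1 else B j].
rewrite /msum [RHS](eq_bigr (fun B : {ffun 'I_n -> 'I_k.+1} =>
    if (0 < B i)%N then F (mbox B) else 0)); last by move=> B _; rewrite mbox_val.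
rewrite -big_mkcond /= [RHS](reindex_onto inc dec); last first.
  move=> B Bi; apply/ffunP => j; rewrite !ffunE; case: eqP => [->|//].
  have Bk : (B i <= k)%N by rewrite -ltnS ltn_ord.
  by apply/val_inj; rewrite /= !val_inord (leq_trans (leq_pred _)) // prednK // Bk.
rewrite (bigID (fun B : {ffun 'I_n -> 'I_k.+1} => (B i < k)%N)) /=.
rewrite [X in _ + X]big1 ?addr0; last first.
  by move=> B; rewrite -leqNgt => Bi; apply: F0; rewrite !ffunE eqxx addn1 ltnS.
apply: eq_big => [B|B Bi].
  case: (ltnP (B i) k) => Bi; rewrite ffunE eqxx val_inord.
    rewrite Bi /=; symmetry; apply/eqP/ffunP => j; rewrite !ffunE.
    by case: eqP => [->|//]; apply/val_inj; rewrite /= !val_inord Bi /= (ltnW Bi).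
  by have -> : ((B i).+1 <= k)%N = false by rewrite ltnNge Bi.
congr F; apply/ffunP => j; rewrite !ffunE; case: (j =P i) => [->|/eqP ji].
  by rewrite eqxx val_inord Bi addn1.
by rewrite eq_sym (negbTE ji) addn0.
Qed.

End BoxSums.

Arguments msum_ext {R n k F} G _.

Section BoxSumsRing.
Variables (R : pzRingType) (n : nat).
Implicit Types (F G : multi n -> R) (J K M : multi n) (i : 'I_n).

Lemma msum_mulr k c F : c * msum k F = msum k (fun K => c * F K).
Proof. exact: mulr_sumr. Qed.

Lemma msum_delta k J F :
  (forall j, (J j <= k)%N) -> msum k (fun K => (K == J)%:R * F K) = F J.
Proof.
move=> Jk; pose BJ : {ffun 'I_n -> 'I_k.+1} := [ffun j => inord (J j)].
have eBJ : mbox BJ = J by apply/ffunP => j; rewrite !ffunE inordK // ltnS.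
rewrite /msum (bigD1 BJ) //= eBJ eqxx mul1r big1 ?addr0 // => B neBJ.
case: eqP => [e|_]; last by rewrite mul0r.
by move: neBJ; rewrite -eBJ in e; rewrite (mbox_inj e) eqxx.
Qed.

Lemma msum_delta_truncate m k J F :
  (forall K, (m < mord K)%N -> F K = 0) -> (m <= k)%N ->
  msum k (fun K => (K == J)%:R * F K) = F J.
Proof.
move=> F0 le_mk; have [/forallP|/forallPn [j]] := boolP [forall j, J j <= k]%N.
  exact: msum_delta.
rewrite -ltnNge => Jj; rewrite F0; last first.
  by apply: leq_trans (mord_ge _ j); apply: leq_ltn_trans Jj.
rewrite /msum big1 // => B _; case: eqP => [e|_]; last by rewrite mul0r.
by move: Jj; rewrite -e mbox_val ltnNge -ltnS ltn_ord.
Qed.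

Lemma msum_first F :
  (forall K, (1 < mord K)%N -> F K = 0) ->
  msum 1 F = F (mzero n) + \sum_(i < n) F (munit i).
Proof.
move=> F0; have unit_le i j : (munit i j <= 1)%N by rewrite ffunE; case: (i == j).
rewrite -(@msum_delta 1 (mzero n) F); last by move=> j; rewrite ffunE.
rewrite (eq_bigr (fun i => msum 1 (fun K => (K == munit i)%:R * F K))); last first.
  by move=> i _; rewrite msum_delta.
rewrite /msum exchange_big /= -big_split /=; apply: eq_bigr => B _.
rewrite -mulr_suml -mulrDl.
have [Ble1|Bgt1] := leqP (mord (mbox B)) 1; last by rewrite F0 // !mulr0.
case: (mord_le1 Ble1) => [->|[j ->]].
  by rewrite eqxx big1 ?addr0 ?mul1r // => i _; rewrite eq_sym munit_neq0.
rewrite munit_neq0 add0r (bigD1 j) //= eqxx big1 ?addr0 ?mul1r // => i ij.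
by rewrite munit_eq eq_sym (negbTE ij).
Qed.

End BoxSumsRing.

Section JetCalculus.
Variables (n : nat) (V : jet_algebra n).
Local Notation A := (ja_carrier V).
Local Notation u := (ja_u V).
Local Notation dx := (ja_dx V).
Local Notation du := (ja_du V).
Local Notation ord := (ja_ord V).
Local Notation D := (@totD _ V).
Local Notation Dm := (@totDm _ V).
Implicit Types (a b c x y Q : A) (J K M : multi n) (i j : 'I_n).

Lemma dx_additive i : additive_map (dx i). Proof. exact: ja_dxD. Qed.
Lemma du_additive J : additive_map (du J). Proof. exact: ja_duD. Qed.

Lemma du0 J : du J 0 = 0. Proof. exact: additive0 (du_additive J). Qed.

Lemma du_sum J I r P (F : I -> A) :
  du J (\sum_(k <- r | P k) F k) = \sum_(k <- r | P k) du J (F k).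
Proof. exact: (@additive_sum _ _ (du J) (du_additive J)). Qed.

Lemma du_signr J m : du J ((-1) ^+ m) = 0.
Proof. exact: derivation_signr (du_additive J) (@ja_duM _ V J) m. Qed.

(* a depends on the jet coordinates u_K of order |K| <= m only *)
Definition order_le (m : nat) a := forall K, (m < mord K)%N -> du K a = 0.

Lemma order_le_ord a : order_le (ord a) a.
Proof. by move=> K; apply: ja_ordP. Qed.

Lemma order_le_mono m m' a : order_le m a -> (m <= m')%N -> order_le m' a.
Proof. by move=> am le_mm' K ltK; apply: am; apply: leq_ltn_trans ltK. Qed.

Lemma order_le_maxl a b : order_le (maxn (ord a) (ord b)) a.
Proof. exact: order_le_mono (@order_le_ord a) (leq_maxl _ _). Qed.

Lemma order_le_maxr a b : order_le (maxn (ord a) (ord b)) b.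
Proof. exact: order_le_mono (@order_le_ord b) (leq_maxr _ _). Qed.

Lemma order_le0 m : order_le m 0.
Proof. by move=> K _; rewrite du0. Qed.

Lemma order_le_signr m k : order_le m ((-1) ^+ k).
Proof. by move=> K _; rewrite du_signr. Qed.

Lemma order_le_du m J a : order_le m a -> order_le m (du J a).
Proof. by move=> am K ltK; rewrite ja_dudu am // du0. Qed.

Lemma order_le_add m a b : order_le m a -> order_le m b -> order_le m (a + b).
Proof. by move=> am bm K ltK; rewrite ja_duD am // bm // addr0. Qed.

Lemma order_le_mul m a b : order_le m a -> order_le m b -> order_le m (a * b).
Proof. by move=> am bm K ltK; rewrite ja_duM am // bm // mul0r mulr0 addr0. Qed.

Lemma order_le_sum m I r (P : pred I) (F : I -> A) :
  (forall k, P k -> order_le m (F k)) -> order_le m (\sum_(k <- r | P k) F k).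
Proof. by move=> Fm K ltK; rewrite du_sum big1 // => k Pk; apply: Fm. Qed.

Lemma totD_box i m k a : order_le m a -> (m <= k)%N ->
  D i a = dx i a + msum k (fun K => u (madd K (munit i)) * du K a).
Proof.
move=> am le_mk; rewrite /totD; congr (_ + _).
apply: (@msum_truncate_min _ _ m (ord a) k) => // K ltK.
  by rewrite am // mulr0.
by rewrite ja_ordP // mulr0.
Qed.

Lemma frechet_box m k a Q : order_le m a -> (m <= k)%N ->
  frechet a Q = msum k (fun K => du K a * Dm K Q).
Proof.
move=> am le_mk; apply: (@msum_truncate_min _ _ m (ord a) k) => // K ltK.
  by rewrite am // mul0r.
by rewrite ja_ordP // mul0r.
Qed.

Lemma totD_additive i : additive_map (D i).
Proof.
move=> a b; set m := maxn (ord a) (ord b).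
have am := @order_le_maxl a b; have bm := @order_le_maxr a b.
rewrite (totD_box i (order_le_add am bm) (leqnn m)) (totD_box i am (leqnn m)).
rewrite (totD_box i bm (leqnn m)) ja_dxD.
rewrite (msum_ext (fun K => u (madd K (munit i)) * du K a +
   u (madd K (munit i)) * du K b)); last by move=> K; rewrite ja_duD mulrDr.
by rewrite msumD; ring.
Qed.

Lemma totD0 i : D i 0 = 0. Proof. exact: additive0 (totD_additive i). Qed.

Lemma totD_mul i a b : D i (a * b) = D i a * b + a * D i b.
Proof.
set m := maxn (ord a) (ord b).
have am := @order_le_maxl a b; have bm := @order_le_maxr a b.
rewrite (totD_box i (order_le_mul am bm) (leqnn m)) (totD_box i am (leqnn m)).
rewrite (totD_box i bm (leqnn m)) ja_dxM.
rewrite (msum_ext (fun K => u (madd K (munit i)) * du K a * b +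
   a * (u (madd K (munit i)) * du K b))); last by move=> K; rewrite ja_duM; ring.
rewrite msumD /msum -mulr_suml -mulr_sumr; ring.
Qed.

Lemma du_totD J i a :
  du J (D i a) = D i (du J a) + (if (0 < J i)%N then du (msub J i) a else 0).
Proof.
have am := @order_le_ord a.
rewrite (totD_box i am (leqnn (ord a))) (totD_box i (order_le_du J am) (leqnn (ord a))).
rewrite ja_duD -ja_dxdu (msum_morph (du_additive J)) -addrA; congr (_ + _).
rewrite [LHS](msum_ext (fun K => (K == msub J i)%:R * ((0 < J i)%:R * du K a) +
    u (madd K (munit i)) * du K (du J a))); last first.
  move=> K; rewrite ja_duM ja_du_u ja_dudu eq_sym madd_unit_eq.
  by case: (0 < J i)%N; case: (_ == _); rewrite /= ?mulr1 ?mulr0 ?mul0r ?mul1r.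
rewrite msumD addrC; congr (_ + _).
rewrite (msum_delta_truncate (m := ord a)) //; first by case: ifP; rewrite ?mul1r ?mul0r.
by move=> K ltK; rewrite ja_ordP // mulr0.
Qed.

Lemma order_le_totD m i a : order_le m a -> order_le m.+1 (D i a).
Proof.
move=> am K ltK; rewrite du_totD am ?totD0 ?add0r; last exact: ltnW.
case: ifP => // Ki; apply: am; rewrite mord_msub //.
by rewrite -ltnS prednK // (leq_trans _ ltK).
Qed.

(* D_i D_j a expanded into partial derivatives, in a form that is symmetric
   in (i, j) term by term once the partial derivatives commute. *)
Lemma totD_totD_expand i j a :
  let k := (ord a).+1 in
  D i (D j a) =
  dx i (dx j a) + msum k (fun K => u (madd K (munit j)) * dx i (du K a)) +
  (msum k (fun M => u (madd M (munit i)) * dx j (du M a)) +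
   msum k (fun M => u (madd M (munit i)) *
                    msum k (fun K => u (madd K (munit j)) * du K (du M a))) +
   msum k (fun K => u (madd (madd K (munit j)) (munit i)) * du K a)).
Proof.
move=> k; have am := @order_le_ord a; have le_ak : (ord a <= k)%N by [].
have dx_Dj : dx i (D j a) =
    dx i (dx j a) + msum k (fun K => u (madd K (munit j)) * dx i (du K a)).
  rewrite (totD_box j am le_ak) ja_dxD (msum_morph (dx_additive i)); congr (_ + _).
  by apply: msum_ext => K; rewrite ja_dxM ja_dx_u mul0r add0r.
have du_Dj M : du M (D j a) = dx j (du M a) +
     msum k (fun K => u (madd K (munit j)) * du K (du M a)) +
     (if (0 < M j)%N then du (msub M j) a else 0).
  by rewrite du_totD (totD_box j (order_le_du M am) le_ak).
have shift_j : msum k (fun M => u (madd M (munit i)) *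
                  (if (0 < M j)%N then du (msub M j) a else 0)) =
               msum k (fun K => u (madd (madd K (munit j)) (munit i)) * du K a).
  rewrite (msum_ext (fun M => if (0 < M j)%N then
        u (madd M (munit i)) * du (msub M j) a else 0)); last first.
    by move=> M; case: ifP; rewrite ?mulr0.
  rewrite -msum_shift; first by apply: msum_ext => K; rewrite msub_madd.
  by move=> M Mj; rewrite am ?mulr0 // mord_msub_gt.
rewrite (totD_box i (order_le_totD j am) (leqnn k)) dx_Dj -shift_j -!msumD.
by congr (_ + _); apply: msum_ext => M; rewrite du_Dj !mulrDr.
Qed.

Lemma totD_comm i j a : D i (D j a) = D j (D i a).
Proof.
rewrite !totD_totD_expand ja_dxdx; set k := (ord a).+1.
have double_sum : msum k (fun M => u (madd M (munit i)) *
                    msum k (fun K => u (madd K (munit j)) * du K (du M a))) =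
                  msum k (fun M => u (madd M (munit j)) *
                    msum k (fun K => u (madd K (munit i)) * du K (du M a))).
  rewrite /msum; under eq_bigr do rewrite mulr_sumr.
  rewrite exchange_big /=; apply: eq_bigr => B _; rewrite mulr_sumr.
  by apply: eq_bigr => B' _; rewrite ja_dudu; ring.
have second_order : msum k (fun K => u (madd (madd K (munit j)) (munit i)) * du K a) =
                    msum k (fun K => u (madd (madd K (munit i)) (munit j)) * du K a).
  by apply: msum_ext => K; rewrite -!maddA (maddC (munit j)).
rewrite double_sum second_order; ring.
Qed.

Lemma totDm_morph (phi : A -> A) : (forall i x, phi (D i x) = D i (phi x)) ->
  forall K x, phi (Dm K x) = Dm K (phi x).
Proof.
move=> phiD K x; rewrite /totDm; elim: (enum 'I_n) => //= j s ih.
by elim: (K j) => //= m ihm; rewrite phiD ihm.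
Qed.

Lemma totDm_additive K : additive_map (Dm K).
Proof.
move=> x y; rewrite /totDm; elim: (enum 'I_n) => //= j s ih.
by elim: (K j) => //= m ihm; rewrite ihm totD_additive.
Qed.

Lemma totDm0 K : Dm K 0 = 0. Proof. exact: additive0 (totDm_additive K). Qed.

Lemma totDmN K a : Dm K (- a) = - Dm K a.
Proof. exact: (@additiveN _ _ (Dm K) (totDm_additive K) a). Qed.

Lemma totDm_zero a : Dm (mzero n) a = a.
Proof. by rewrite /totDm; elim: (enum 'I_n) => //= j s ih; rewrite ffunE. Qed.

Lemma totDm_totD K i a : Dm K (D i a) = D i (Dm K a).
Proof. by symmetry; apply: totDm_morph => j x; apply: totD_comm. Qed.

Lemma totDm_add_unit K i a : Dm (madd K (munit i)) a = D i (Dm K a).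
Proof.
have iter_comm j m x : iter m (D j) (D i x) = D i (iter m (D j) x).
  by elim: m => //= m ->; rewrite totD_comm.
rewrite /totDm; have : forall s : seq 'I_n, uniq s ->
  foldr (fun j b => iter (madd K (munit i) j) (D j) b) a s =
  if i \in s then D i (foldr (fun j b => iter (K j) (D j) b) a s)
  else foldr (fun j b => iter (K j) (D j) b) a s.
  elim=> [|j s ih] //= /andP [js s_uniq]; rewrite in_cons ih // ffunE.
  case: (i =P j) => [->|/eqP ij] /=; first by rewrite (negbTE js) ffunE eqxx addn1.
  by rewrite ffunE (negbTE ij) addn0; case: ifP => // _; apply: iter_comm.
by move=> /(_ (enum 'I_n) (enum_uniq _)); rewrite mem_enum.
Qed.

Lemma totDm_unit i a : Dm (munit i) a = D i a.
Proof. by rewrite -{1}(madd0 (munit i)) totDm_add_unit totDm_zero. Qed.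

Lemma order_le_totDm m K a : order_le m a -> order_le (m + mord K) (Dm K a).
Proof.
move=> am; have : forall d K, mord K = d -> order_le (m + d) (Dm K a).
  elim=> [|d ih] K' K'd; first by rewrite (mord_eq0 K'd) totDm_zero addn0.
  have [i K'i] := pos_entry K'd.
  rewrite -(madd_msub K'i) totDm_add_unit addnS; apply: order_le_totD; apply: ih.
  by rewrite mord_msub // K'd.
by move=> /(_ _ K erefl).
Qed.

Lemma signr_madd_unit K i :
  (-1) ^+ mord (madd K (munit i)) = - (-1) ^+ mord K :> A.
Proof. by rewrite mordD mord_unit addn1 exprS mulN1r. Qed.

Lemma euler_box m k a : order_le m a -> (m <= k)%N ->
  euler a = msum k (fun K => (-1) ^+ mord K * Dm K (du K a)).
Proof.
move=> am le_mk; apply: (@msum_truncate_min _ _ m (ord a) k) => // K ltK.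
  by rewrite am // totDm0 mulr0.
by rewrite ja_ordP // totDm0 mulr0.
Qed.

Lemma euler_additive : additive_map (@euler _ V).
Proof.
move=> x y; set m := maxn (ord x) (ord y).
have xm := @order_le_maxl x y; have ym := @order_le_maxr x y.
rewrite (euler_box (order_le_add xm ym) (leqnn m)) (euler_box xm (leqnn m)).
rewrite (euler_box ym (leqnn m)) -msumD; apply: msum_ext => K.
by rewrite ja_duD totDm_additive mulrDr.
Qed.

Lemma eulerN x : euler (- x) = - euler x.
Proof. exact: (@additiveN _ _ (@euler _ V) euler_additive x). Qed.

Lemma euler_totD i c : euler (D i c) = 0.
Proof.
have cm := @order_le_ord c; set m := ord c; set k := m.+1.
rewrite (euler_box (order_le_totD i cm) (leqnn k)).
pose G M := (-1) ^+ mord M * Dm M (du (msub M i) c).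
rewrite (msum_ext (fun K => - G (madd K (munit i)) + (if (0 < K i)%N then G K else 0)));
  last first.
  move=> K; rewrite du_totD totDm_additive mulrDr /G signr_madd_unit msub_madd.
  rewrite totDm_add_unit -totDm_totD.
  by case: ifP => _; rewrite ?totDm0 ?mulr0 ?addr0 // mulNr opprK.
rewrite msumD -msum_shift ?msumN ?addNr // => M Mi.
by rewrite /G cm ?totDm0 ?mulr0 // mord_msub_gt.
Qed.

Lemma euler_by_parts J a b :
  euler (a * Dm J b) = euler ((-1) ^+ mord J * (b * Dm J a)).
Proof.
have : forall d J a b, mord J = d ->
    euler (a * Dm J b) = euler ((-1) ^+ d * (b * Dm J a)).
  elim=> [|d ih] J' a' b' J'd.
    by rewrite (mord_eq0 J'd) !totDm_zero expr0 mul1r mulrC.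
  have [i J'i] := pos_entry J'd.
  have J'd' : mord (msub J' i) = d by rewrite mord_msub // J'd.
  rewrite -(madd_msub J'i) !totDm_add_unit.
  have -> : a' * D i (Dm (msub J' i) b') =
            D i (a' * Dm (msub J' i) b') - D i a' * Dm (msub J' i) b'.
    by rewrite totD_mul; ring.
  rewrite euler_additive eulerN euler_totD add0r (ih _ _ _ J'd') -totDm_totD -eulerN.
  by rewrite exprS mulN1r mulNr.
by move=> /(_ _ J a b erefl).
Qed.

Lemma frechet_additive Q : additive_map (fun x => frechet x Q).
Proof.
move=> x y; set m := maxn (ord x) (ord y).
have xm := @order_le_maxl x y; have ym := @order_le_maxr x y.
rewrite (frechet_box Q (order_le_add xm ym) (leqnn m)) (frechet_box Q xm (leqnn m)).
rewrite (frechet_box Q ym (leqnn m)) -msumD; apply: msum_ext => K.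
by rewrite ja_duD mulrDl.
Qed.

Lemma frechet_signr m x Q : frechet ((-1) ^+ m * x) Q = (-1) ^+ m * frechet x Q.
Proof.
have xo := @order_le_ord x.
rewrite (frechet_box Q (order_le_mul (@order_le_signr _ m) xo) (leqnn _)).
rewrite (frechet_box Q xo (leqnn _)) msum_mulr; apply: msum_ext => K.
by rewrite ja_duM du_signr mul0r add0r mulrA.
Qed.

Lemma order_le_frechet m q a Q :
  order_le m a -> order_le q Q -> order_le (m + q) (frechet a Q).
Proof.
move=> am Qq; rewrite (frechet_box Q am (leqnn m)); apply: order_le_sum => B _.
have [Bm|Bm] := leqP (mord (mbox B)) m; last by rewrite am // mul0r; apply: order_le0.
apply: order_le_mul; first by apply: order_le_mono (order_le_du _ am) _; apply: leq_addr.
by apply: order_le_mono (order_le_totDm (K := mbox B) Qq) _; rewrite addnC leq_add2r.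
Qed.

Lemma frechet_totD i x Q : frechet (D i x) Q = D i (frechet x Q).
Proof.
have xo := @order_le_ord x; set m := ord x; set k := m.+1.
rewrite (frechet_box Q (order_le_totD i xo) (leqnn k)) (frechet_box Q xo (leqnSn m)).
rewrite (msum_morph (totD_additive i)).
rewrite (msum_ext (fun K => D i (du K x) * Dm K Q +
     (if (0 < K i)%N then du (msub K i) x * Dm K Q else 0))); last first.
  by move=> K; rewrite du_totD mulrDl; case: ifP; rewrite ?mul0r.
rewrite [RHS](msum_ext (fun K => D i (du K x) * Dm K Q +
     du (msub (madd K (munit i)) i) x * Dm (madd K (munit i)) Q)); last first.
  by move=> K; rewrite totD_mul msub_madd totDm_add_unit.
rewrite !msumD (msum_shift (F := fun M => du (msub M i) x * Dm M Q)) // => M Mi.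
by rewrite xo ?mul0r // mord_msub_gt.
Qed.

Lemma frechet_totDm K x Q : frechet (Dm K x) Q = Dm K (frechet x Q).
Proof. exact: (@totDm_morph (fun x => frechet x Q) (fun i x => frechet_totD i x Q)). Qed.

Lemma du_frechet K a Q : du K (frechet a Q) =
  frechet (du K a) Q + msum (ord a) (fun J => du J a * du K (Dm J Q)).
Proof.
rewrite [frechet a Q](frechet_box Q (@order_le_ord a) (leqnn _)).
rewrite (msum_morph (du_additive K)).
rewrite (frechet_box Q (order_le_du K (@order_le_ord a)) (leqnn _)) -msumD.
by apply: msum_ext => J; rewrite ja_duM ja_dudu.
Qed.

Definition frechet_adj Q c : A :=
  msum (ord Q) (fun K => (-1) ^+ mord K * Dm K (du K Q * c)).

Lemma frechet_adj_box q k Q c : order_le q Q -> (q <= k)%N ->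
  frechet_adj Q c = msum k (fun K => (-1) ^+ mord K * Dm K (du K Q * c)).
Proof.
move=> Qq le_qk; apply: (@msum_truncate_min _ _ q (ord Q) k) => // K ltK.
  by rewrite Qq // mul0r totDm0 mulr0.
by rewrite ja_ordP // mul0r totDm0 mulr0.
Qed.

Lemma frechet_adj_additive Q : additive_map (frechet_adj Q).
Proof.
move=> x y; rewrite /frechet_adj -msumD; apply: msum_ext => K.
by rewrite mulrDr totDm_additive mulrDr.
Qed.

Lemma frechet_adj_totD i Q c : frechet_adj (D i Q) c = - frechet_adj Q (D i c).
Proof.
have Qo := @order_le_ord Q; set q := ord Q; set k := q.+1.
rewrite (frechet_adj_box c (order_le_totD i Qo) (leqnn k)).
rewrite (frechet_adj_box (D i c) Qo (leqnSn q)).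
pose G M := (-1) ^+ mord M * Dm M (du (msub M i) Q * c).
rewrite (msum_ext (fun K => - G (madd K (munit i))
     - (-1) ^+ mord K * Dm K (du K Q * D i c)
     + (if (0 < K i)%N then G K else 0))); last first.
  move=> K; rewrite du_totD mulrDl.
  have -> : D i (du K Q) * c = D i (du K Q * c) - du K Q * D i c.
    by rewrite totD_mul; ring.
  rewrite /G signr_madd_unit msub_madd totDm_add_unit -totDm_totD !totDm_additive totDmN.
  by case: ifP => _; rewrite ?mul0r ?totDm0; ring.
rewrite !msumD -msum_shift; first by rewrite !msumN; ring.
by move=> M Mi; rewrite /G Qo ?mul0r ?totDm0 ?mulr0 // mord_msub_gt.
Qed.

Lemma frechet_adj_totDm J Q c :
  frechet_adj (Dm J Q) c = frechet_adj Q ((-1) ^+ mord J * Dm J c).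
Proof.
have : forall d J c, mord J = d ->
    frechet_adj (Dm J Q) c = frechet_adj Q ((-1) ^+ d * Dm J c).
  elim=> [|d ih] J' c' J'd.
    by rewrite (mord_eq0 J'd) !totDm_zero expr0 mul1r.
  have [i J'i] := pos_entry J'd.
  have J'd' : mord (msub J' i) = d by rewrite mord_msub // J'd.
  rewrite -(madd_msub J'i) !totDm_add_unit frechet_adj_totD (ih _ _ J'd').
  rewrite -(@additiveN _ _ _ (frechet_adj_additive Q)) -totDm_totD.
  by rewrite exprS mulN1r mulNr.
by move=> /(_ _ J c erefl).
Qed.

Lemma euler_frechet a Q :
  euler (frechet a Q) = frechet (euler a) Q + frechet_adj Q (euler a).
Proof.
have am := @order_le_ord a; have Qq := @order_le_ord Q.
set m := ord a; set q := ord Q; set k := (m + q)%N.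
rewrite (euler_box (order_le_frechet am Qq) (leqnn k)).
rewrite (msum_ext (fun K => (-1) ^+ mord K * Dm K (frechet (du K a) Q) +
    msum m (fun J => (-1) ^+ mord K * Dm K (du K (Dm J Q) * du J a)))); last first.
  move=> K; rewrite du_frechet totDm_additive mulrDr (msum_morph (totDm_additive K)).
  by rewrite msum_mulr; congr (_ + _); apply: msum_ext => J; rewrite [du J a * _]mulrC.
rewrite msumD; congr (_ + _).
  rewrite (euler_box am (leq_addr q m)) (msum_morph (frechet_additive Q)).
  by apply: msum_ext => K; rewrite frechet_signr frechet_totDm.
rewrite msum_exchange [euler a](euler_box am (leqnn m)).
rewrite (msum_morph (frechet_adj_additive Q)); apply: msum_ext => J.
rewrite -frechet_adj_totDm; have [Jm|Jm] := leqP (mord J) m.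
  rewrite (@frechet_adj_box _ k _ (du J a) (order_le_totDm (K := J) Qq)) //.
  by rewrite addnC leq_add2r.
rewrite am // (additive0 (frechet_adj_additive _)) /msum big1 // => B _.
by rewrite mulr0 totDm0 mulr0.
Qed.

Lemma euler_frechet_by_parts a Q : euler (frechet a Q) = euler (Q * euler a).
Proof.
rewrite (frechet_box Q (@order_le_ord a) (leqnn _)) (msum_morph euler_additive).
rewrite (msum_ext (fun J => euler ((-1) ^+ mord J * (Q * Dm J (du J a)))));
  last by move=> J; apply: euler_by_parts.
rewrite -(msum_morph euler_additive) [euler a](euler_box (@order_le_ord a) (leqnn _)).
by rewrite msum_mulr; congr euler; apply: msum_ext => J; rewrite mulrCA.
Qed.

Lemma euler_mul_euler L Q :
  euler (Q * euler L) = frechet (euler L) Q + frechet_adj Q (euler L).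
Proof. by rewrite -euler_frechet_by_parts euler_frechet. Qed.

Lemma frechet_first_order P a : order_le 1 P ->
  frechet P a = du (mzero n) P * a + \sum_(i < n) du (munit i) P * D i a.
Proof.
move=> P1; rewrite (frechet_box a P1 (leqnn 1)) msum_first; last first.
  by move=> K K1; rewrite P1 // mul0r.
by rewrite totDm_zero; congr (_ + _); apply: eq_bigr => i _; rewrite totDm_unit.
Qed.

Lemma frechet_adj_first_order P c : order_le 1 P ->
  frechet_adj P c = du (mzero n) P * c - \sum_(i < n) D i (du (munit i) P * c).
Proof.
move=> P1; rewrite (frechet_adj_box c P1 (leqnn 1)) msum_first; last first.
  by move=> K K1; rewrite P1 // mul0r totDm0 mulr0.
rewrite mord0 expr0 mul1r totDm_zero -sumrN; congr (_ + _); apply: eq_bigr => i _.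
by rewrite mord_unit expr1 mulN1r totDm_unit.
Qed.

Lemma prolong_contact P G :
  prolong (xiP P) (etaP P) G = frechet G P - \sum_(i < n) du (munit i) P * D i G.
Proof.
rewrite /prolong.
have -> : etaP P - \sum_(i < n) xiP P i * u (munit i) = P.
  rewrite /etaP /xiP [X in _ - X](eq_bigr (fun i => - (u (munit i) * du (munit i) P))).
    by rewrite sumrN opprK subrK.
  by move=> i _; rewrite mulNr mulrC.
rewrite (eq_bigr (fun B => du (mbox B) G * Dm (mbox B) P +
   \sum_(i < n) xiP P i * (u (madd (mbox B) (munit i)) * du (mbox B) G))); last first.
  move=> B _; rewrite mulrDl mulr_suml [Dm _ _ * _]mulrC; congr (_ + _).
  by apply: eq_bigr => i _; rewrite mulrA.
rewrite big_split /= exchange_big /= /frechet /totD /xiP.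
under [X in _ + (_ + X)]eq_bigr do rewrite -mulr_sumr.
under eq_bigr do rewrite mulNr.
under [X in _ + (_ + X)]eq_bigr do rewrite mulNr.
under [X in _ - X]eq_bigr do rewrite mulrDr.
rewrite big_split /= !sumrN; ring.
Qed.

Lemma adjoint_RP P f a :
  adjointop 1 (RPcoef P f) a = f * a - \sum_(i < n) D i (du (munit i) P * a).
Proof.
have RP0 : RPcoef P f (mzero n) = f.
  by rewrite /RPcoef eqxx mul1r big1 ?subr0 // => i _; rewrite eq_sym munit_neq0 mul0r.
have RPi i : RPcoef P f (munit i) = du (munit i) P.
  rewrite /RPcoef munit_neq0 mul0r sub0r (bigD1 i) //= eqxx mul1r.
  rewrite big1 ?addr0 /xiP ?opprK // => j ji.
  by rewrite munit_eq eq_sym (negbTE ji) mul0r.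
change (adjointop 1 (RPcoef P f) a) with
  (msum 1 (fun K => (-1) ^+ mord K * Dm K (RPcoef P f K * a))).
rewrite msum_first; last first.
  move=> K K1; have K0 : (K == mzero n) = false.
    by apply/negP => /eqP K0; move: K1; rewrite K0 mord0.
  rewrite /RPcoef K0 big1 /= ?mul0r ?subr0 ?mul0r ?totDm0 ?mulr0 // => i _.
  have -> : (K == munit i) = false.
    by apply/negP => /eqP Ki; move: K1; rewrite Ki mord_unit.
  by rewrite mul0r.
rewrite mord0 expr0 mul1r totDm_zero RP0 -sumrN; congr (_ + _); apply: eq_bigr => i _.
by rewrite mord_unit expr1 mulN1r totDm_unit RPi.
Qed.

Definition recursion_factor P f : A :=
  f + du (mzero n) P - \sum_(i < n) D i (du (munit i) P).

(* For a first-order characteristic, S = R_P^* + P' is multiplication by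
   the recursion factor: the first-order terms P_{u_i} D_i cancel. *)
Lemma recursion_operator_mul P f a : order_le 1 P ->
  Sop P f a = recursion_factor P f * a.
Proof.
move=> P1; rewrite /Sop adjoint_RP frechet_first_order //.
under eq_bigr do rewrite totD_mul.
by rewrite big_split /= /recursion_factor !mulrDl mulNr mulr_suml; ring.
Qed.

Lemma recursion_factor_euler L P f : order_le 1 P ->
  prolong (xiP P) (etaP P) (euler L) = f * euler L ->
  recursion_factor P f * euler L = euler (P * euler L).
Proof.
move=> P1 XG; set G := euler L.
have G'P : frechet G P = f * G + \sum_(i < n) du (munit i) P * D i G.
  by rewrite -XG prolong_contact subrK.
rewrite euler_mul_euler -/G G'P frechet_adj_first_order //.
under [X in _ = _ + (_ - X)]eq_bigr do rewrite totD_mul.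
by rewrite big_split /= /recursion_factor !mulrDl mulNr mulr_suml; ring.
Qed.

End JetCalculus.

Unset Implicit Arguments. Set Strict Implicit.

Theorem corollary4p7 (n : nat) (V : jet_algebra n)
    (L G P f : ja_carrier V) :
  G = euler L ->
  (* P = P(x, u, u_1, ..., u_n) *)
  (forall K : multi n, (1 < mord K)%N -> ja_du V K P = 0) ->
  (* pr X_P (G) = f G *)
  prolong (xiP P) (etaP P) G = f * G ->
  (* the symmetry is not variational *)
  euler (P * G) != 0 ->
  let W := f + ja_du V (mzero n) P
             - \sum_(i < n) totD i (ja_du V (munit i) P) in
  (forall a : ja_carrier V, Sop P f a = W * a) /\ var_int_factor W G.
Proof.
move=> -> P1 XG not_variational W.
have WG : W * euler L = euler (P * euler L) by apply: recursion_factor_euler.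
split; first by move=> a; apply: recursion_operator_mul.
split; last by exists (P * euler L).
by apply: contraNneq not_variational => W0; rewrite -WG W0 mul0r.
Qed.
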